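(* Let $\Sigma$ be a finite alphabet and $\Sigma^*$ the set of finite strings over $\Sigma$. Let $p$ and $q$ be probability distributions on $\Sigma^*$ with $p \ll q$ (i.e. $q(x)=0 \Rightarrow p(x)=0$). Let $X^{(1)},\dots,X^{(N)}$ be i.i.d. with law $q$, let $W \coloneqq p(X)/q(X)$ for $X\sim q$, and assume $\mathbb{E}_q[W^4]<\infty$. Define the importance resampling distribution $$\widehat{p}_N(x) \coloneqq \sum_{n=1}^N \frac{w^{(n)}}{\sum_{m=1}^N w^{(m)}}\,\mathbf{1}\{X^{(n)}=x\},\qquad w^{(n)} \coloneqq \frac{p(X^{(n)})}{q(X^{(n)})},$$ let $\overline{p}_N \coloneqq \mathbb{E}[\widehat{p}_N]$ (expectation over the samples), and let $\chi^2(p\|q)\coloneqq \mathbb{E}_q[(W-1)^2]$. Then, as $N\to\infty$: 1. $\|\overline{p}_N - p\|_1 = O\!\left(\sqrt{(1+\chi^2(p\|q))/N}\right)$; 2. $\|\overline{p}_N - p\|_2^2 = O\!\left((1+\chi^2(p\|q))/N\right)$; 3. $\mathbb{E}\big[\|\widehat{p}_N - p\|_2^2\big] = O\!\left((1+\chi^2(p\|q))/N\right)$.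
   Context: Norms are over functions on $\Sigma^*$: $\|f\|_1=\sum_{x\in\Sigma^*}|f(x)|$, $\|f\|_2^2=\sum_{x\in\Sigma^*} f(x)^2$. $\widehat{p}_N$ is a random probability distribution on $\Sigma^*$ (almost surely well-defined since the weights are positive with probability one on the support of $p$... more precisely the normalizer $\sum_m w^{(m)}$ is a.s. positive when needed). *)

(* Sums over the countable set Sigma^* (= seq S)
   and over the sample space (Sigma^* )^N are extended-real [esum]s of
   nonnegative terms. *)
From mathcomp Require Import all_boot all_order all_algebra.
From mathcomp Require Import all_classical all_reals all_analysis.
Set Implicit Arguments. Unset Strict Implicit. Unset Printing Implicit Defensive.
Import Order.TTheory GRing.Theory Num.Theory.
Local Open Scope classical_set_scope.
Local Open Scope ring_scope.

Section Defs.
Variables (R : realType) (S : finType).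

Definition is_distr (p : seq S -> R) : Prop :=
  (forall x, 0 <= p x) /\ (\esum_(x in [set: seq S]) (p x)%:E = 1%E).

Definition abs_cont (p q : seq S -> R) : Prop := forall x, q x = 0 -> p x = 0.

(* importance weight W(x) = p(x)/q(x) (only used where q(x) > 0) *)
Definition weight (p q : seq S -> R) (x : seq S) : R := p x / q x.

(* E_q[ F(W) ] for nonnegative F *)
Definition Eq_W (p q : seq S -> R) (F : R -> R) : \bar R :=
  \esum_(x in [set: seq S]) (q x * F (weight p q x))%:E.

Definition chi2 (p q : seq S -> R) : \bar R := Eq_W p q (fun w => (w - 1) ^+ 2).

(* importance resampling distribution for the sample s = (X^(1),...,X^(N));
   by MathComp's convention x/0 = 0 it is the zero function when all weights
   vanish *)
Definition phat (p q : seq S -> R) (N : nat) (s : {ffun 'I_N -> seq S})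
    (x : seq S) : R :=
  \sum_(n < N) (weight p q (s n) / \sum_(m < N) weight p q (s m))
               * ((s n == x)%:R).

Definition sample_prob (q : seq S -> R) (N : nat) (s : {ffun 'I_N -> seq S}) : R :=
  \prod_(n < N) q (s n).

Definition Esample (q : seq S -> R) (N : nat) (F : {ffun 'I_N -> seq S} -> \bar R)
    : \bar R :=
  \esum_(s in [set: {ffun 'I_N -> seq S}]) ((sample_prob q s)%:E * F s)%E.

(* pbar_N = E[phat_N] (pointwise; phat_N(x) in [0,1]) *)
Definition pbar (p q : seq S -> R) (N : nat) (x : seq S) : R :=
  fine (Esample q (fun s : {ffun 'I_N -> seq S} => (phat p q s x)%:E)).

Definition norm1 (f : seq S -> R) : \bar R :=
  \esum_(x in [set: seq S]) (`|f x|)%:E.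

Definition norm2sq (f : seq S -> R) : \bar R :=
  \esum_(x in [set: seq S]) (f x ^+ 2)%:E.

End Defs.

From mathcomp Require Import all_boot all_order all_algebra.
From mathcomp Require Import all_classical all_reals all_analysis.
From mathcomp Require Import ring lra.
Set Implicit Arguments. Unset Strict Implicit. Unset Printing Implicit Defensive.
Import Order.TTheory GRing.Theory Num.Theory.
Local Open Scope classical_set_scope.
Local Open Scope ring_scope.

(* Write Z := (1/N) sum_n w(X_n) and pt(x) := (1/N) sum_n w(X_n) 1{X_n = x}, so
   that phat = pt / Z.  Both are sample means of i.i.d. terms: E pt(x) = p(x),
   Var pt(x) <= q(x) w(x)^2 / N, E Z = 1 and Var Z = chi^2 / N, the second moment
   E_q W^2 = 1 + chi^2 being finite because E_q W^4 is.  Since pt = Z phat, the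
   bias pbar(x) - p(x) = E[phat(x) (1 - Z)] sums over x to at most
   E|Z - 1| <= sqrt(chi^2 / N); the l2 bias is at most the square of the l1 bias;
   and pointwise (phat - p)^2 <= 2 (pt - p)^2 + 2 (Z - 1)^2 phat, whose
   expectation summed over x is at most 4 (1 + chi^2) / N. *)

Section esum_facts.
Variables (R : realType) (T : choiceType).
Local Open Scope ereal_scope.

Lemma esumZl (I : set T) (c : R) (a : T -> \bar R) : (0 <= c)%R ->
  (forall i, I i -> 0 <= a i) ->
  \esum_(i in I) (c%:E * a i) = c%:E * \esum_(i in I) a i.
Proof.
move=> c0 a0; rewrite /esum -ereal_supZl //; last first.
  by apply/set0P; exists 0, set0; [exact: fsets_set0 | rewrite fsbig_set0].
have sumZ A : fsets I A -> \sum_(i \in A) c%:E * a i = c%:E * \sum_(i \in A) a i.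
  move=> [finA AI]; rewrite !fsbig_finite // !big_seq ge0_sume_distrr // => i.
  by rewrite in_fset_set // inE => /AI/a0.
congr ereal_sup; apply/seteqP; split => y /=.
  by move=> [A IA <-]; exists (\sum_(i \in A) a i); [exists A | rewrite sumZ].
by move=> [_ [A IA <-] <-]; exists A; rewrite ?sumZ.
Qed.

Lemma exchange_esum (T' : choiceType) (a : T -> T' -> \bar R) :
  (forall i j, 0 <= a i j) ->
  \esum_(i in [set: T]) \esum_(j in [set: T']) a i j =
  \esum_(j in [set: T']) \esum_(i in [set: T]) a i j.
Proof.
move=> a0; rewrite !esum_esum //.
rewrite (reindex_esum ([set: T'] `*`` fun=> [set: T]) _ (fun x => (x.2, x.1))) //.
split=> [[i j] //|[i1 i2] [j1 j2] _ _ [-> ->] //|[i j] _].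
by exists (j, i).
Qed.

Lemma esum_supp1 (t : T) (a : T -> \bar R) :
  (forall i, 0 <= a i) -> (forall i, i != t -> a i = 0) ->
  \esum_(i in [set: T]) a i = a t.
Proof.
move=> a0 a_supp; rewrite (esumID [set t]) // setTI esum_set1 // esum1 ?adde0 //.
by move=> i [_ /eqP/a_supp].
Qed.

End esum_facts.

Section esum_ffun_prod.
Variables (R : realType) (T : choiceType).

Definition ffun_cons N (y : T) (s : {ffun 'I_N -> T}) : {ffun 'I_N.+1 -> T} :=
  [ffun i => if unlift ord0 i is Some j then s j else y].

Lemma ffun_cons0 N y (s : {ffun 'I_N -> T}) : ffun_cons y s ord0 = y.
Proof. by rewrite ffunE unlift_none. Qed.

Lemma ffun_consS N y (s : {ffun 'I_N -> T}) j : ffun_cons y s (lift ord0 j) = s j.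
Proof. by rewrite ffunE liftK. Qed.

Lemma ffun_cons_bij N :
  set_bij ([set: T] `*`` fun=> [set: {ffun 'I_N -> T}]) [set: {ffun 'I_N.+1 -> T}]
    (fun ys => ffun_cons ys.1 ys.2).
Proof.
split=> [//|[y1 s1] [y2 s2] _ _ /= e|t _].
  have y12 : y1 = y2 by rewrite -(ffun_cons0 y1 s1) e ffun_cons0.
  congr pair => //; apply/ffunP => j.
  by rewrite -(ffun_consS y1 s1 j) e ffun_consS.
exists (t ord0, [ffun j => t (lift ord0 j)]) => //=.
by apply/ffunP => i; rewrite ffunE; case: unliftP => [j ->|->]; rewrite ?ffunE.
Qed.

Lemma esum_ffun_prod N (a : 'I_N -> T -> R) (m : 'I_N -> R) :
  (forall n y, 0 <= a n y) ->
  (forall n, \esum_(y in [set: T]) (a n y)%:E = (m n)%:E) ->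
  \esum_(s in [set: {ffun 'I_N -> T}]) (\prod_(n < N) a n (s n))%:E
    = (\prod_(n < N) m n)%:E.
Proof.
elim: N a m => [|N IH] a m a0 am.
  rewrite (_ : [set: {ffun 'I_0 -> T}] = [set ffun0 (card_ord 0)]).
    by rewrite esum_set1 !big_ord0 // lee_fin.
  by apply/seteqP; split => s // _; apply/ffunP => -[].
have m0 n : 0 <= m n by rewrite -lee_fin -am esum_ge0 // => y _; rewrite lee_fin.
rewrite (reindex_esum _ _ _ _ (ffun_cons_bij N)) -(esum_esum (J := fun=> setT)
  (a := fun y s => (\prod_(n < N.+1) a n (ffun_cons y s n))%:E)) /=; last first.
  by move=> y s _ _; rewrite lee_fin prodr_ge0.
under eq_esum => y _.
  under eq_esum => s _ do rewrite big_ord_recl ffun_cons0 EFinM.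
  rewrite esumZl //; last by move=> s _; rewrite lee_fin prodr_ge0.
  under eq_esum => s _ do under eq_bigr => i _ do rewrite ffun_consS.
  rewrite (IH (fun i => a (lift ord0 i)) (fun i => m (lift ord0 i))) // muleC.
  over.
rewrite esumZl ?prodr_ge0 //; last by move=> y _; rewrite lee_fin.
by rewrite am big_ord_recl -EFinM mulrC.
Qed.

End esum_ffun_prod.

Lemma prodr_supp2 (R : comPzRingType) N (n m : 'I_N) (F : 'I_N -> R) : n != m ->
  (forall i, i != n -> i != m -> F i = 1) -> \prod_(i < N) F i = F n * F m.
Proof.
move=> nm F1; rewrite (bigD1 n) // (bigD1 m) 1?eq_sym //= big1 ?mulr1 ?mulrA //.
by move=> i /andP[/F1].
Qed.

Lemma sum_ord_if_eq (R : pzRingType) N (n : 'I_N) (a b : R) :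
  \sum_(m < N) (if n == m then a else b) = a + (N%:R - 1) * b.
Proof.
have N0 : (0 < N)%N by apply: leq_ltn_trans (ltn_ord n).
rewrite (bigD1 n) //= eqxx (eq_bigr (fun=> b)) => [|m]; last first.
  by rewrite eq_sym => /negbTE ->.
by rewrite sumr_const cardC1 card_ord -[in RHS](prednK N0) -addn1 natrD addrK mulr_natl.
Qed.

Section real_inequalities.
Variable R : realFieldType.

Lemma ler_norm_amgm (u r : R) : 0 < r -> `|u| <= (2 * r)^-1 * u ^+ 2 + r / 2.
Proof.
move=> r0; rewrite -real_normK ?num_real //; set v := `|u|.
have -> : (2 * r)^-1 * v ^+ 2 + r / 2 = (v ^+ 2 + r ^+ 2) / (2 * r).
  by field; rewrite gt_eqF.
rewrite ler_pdivlMr ?mulr_gt0 //; have := sqr_ge0 (v - r); nra.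
Qed.

Lemma sqr_rescale_le (ph a z : R) : 0 <= ph <= 1 ->
  (ph - a) ^+ 2 <= 2 * (z * ph - a) ^+ 2 + 2 * (z - 1) ^+ 2 * ph.
Proof.
move=> /andP[ph0 ph1].
have := sqr_ge0 ((z * ph - a) + ph * (z - 1)).
have : 0 <= ph * (z - 1) ^+ 2 * (1 - ph).
  apply: mulr_ge0; last by rewrite subr_ge0.
  by apply: mulr_ge0 => //; exact: sqr_ge0.
rewrite !expr2; nra.
Qed.

End real_inequalities.

Section iid_sample.
Variables (R : realType) (S : finType) (q : seq S -> R).
Hypothesis hq : is_distr q.
Local Notation T := (seq S).
Local Open Scope ereal_scope.

Definition Eq_X (g : T -> R) : \bar R := \esum_(y in [set: T]) (q y * g y)%:E.

Definition smean N (g : T -> R) (s : {ffun 'I_N -> T}) : R :=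
  ((\sum_(n < N) g (s n)) / N%:R)%R.

Lemma q_ge0 y : (0 <= q y)%R. Proof. by case: hq. Qed.

Lemma Eq_X_ge0 g : (forall y, 0 <= g y)%R -> 0 <= Eq_X g.
Proof. by move=> g0; apply: esum_ge0 => y _; rewrite lee_fin mulr_ge0 ?q_ge0. Qed.

Lemma Eq_X1 : Eq_X (fun=> 1%R) = 1.
Proof. by rewrite /Eq_X; under eq_esum do rewrite mulr1; case: hq. Qed.

Lemma le_Eq_X f g : (forall y, f y <= g y)%R -> Eq_X f <= Eq_X g.
Proof. by move=> fg; apply: le_esum => y _; rewrite lee_fin ler_wpM2l ?q_ge0. Qed.

Lemma Eq_XD f g : (forall y, 0 <= f y)%R -> (forall y, 0 <= g y)%R ->
  Eq_X (fun y => f y + g y)%R = Eq_X f + Eq_X g.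
Proof.
move=> f0 g0; rewrite /Eq_X -esumD => [|y _|y _]; rewrite ?lee_fin ?mulr_ge0 ?q_ge0 //.
by apply: eq_esum => y _; rewrite mulrDr EFinD.
Qed.

Lemma Eq_XZ (c : R) f : (0 <= c)%R -> (forall y, 0 <= f y)%R ->
  Eq_X (fun y => c * f y)%R = c%:E * Eq_X f.
Proof.
move=> c0 f0; rewrite /Eq_X -esumZl // => [|y _]; last by rewrite lee_fin mulr_ge0 ?q_ge0.
by apply: eq_esum => y _; rewrite mulrCA EFinM.
Qed.

Variable N : nat.
Implicit Types (F G : {ffun 'I_N -> T} -> \bar R) (s : {ffun 'I_N -> T}).

Lemma sample_prob_ge0 s : (0 <= sample_prob q s)%R.
Proof. by apply: prodr_ge0 => i _; exact: q_ge0. Qed.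

Lemma Esample_ge0 F : (forall s, 0 <= F s) -> 0 <= Esample q F.
Proof.
by move=> F0; apply: esum_ge0 => s _; rewrite mule_ge0 ?lee_fin ?sample_prob_ge0.
Qed.

Lemma le_Esample F G : (forall s, F s <= G s) -> Esample q F <= Esample q G.
Proof.
by move=> FG; apply: le_esum => s _; rewrite lee_wpmul2l ?lee_fin ?sample_prob_ge0.
Qed.

Lemma EsampleD F G : (forall s, 0 <= F s) -> (forall s, 0 <= G s) ->
  Esample q (fun s => F s + G s) = Esample q F + Esample q G.
Proof.
move=> F0 G0; rewrite /Esample -esumD => [|s _|s _]; last 2 first.
- by rewrite mule_ge0 ?lee_fin ?sample_prob_ge0.
- by rewrite mule_ge0 ?lee_fin ?sample_prob_ge0.
by apply: eq_esum => s _; rewrite ge0_muleDr.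
Qed.

Lemma EsampleZ (c : R) F : (0 <= c)%R -> (forall s, 0 <= F s) ->
  Esample q (fun s => c%:E * F s) = c%:E * Esample q F.
Proof.
move=> c0 F0; rewrite /Esample -esumZl // => [|s _]; last first.
  by rewrite mule_ge0 ?lee_fin ?sample_prob_ge0.
by apply: eq_esum => s _; rewrite muleCA.
Qed.

Lemma Esample_sum M (F : 'I_M -> {ffun 'I_N -> T} -> \bar R) :
  (forall i s, 0 <= F i s) ->
  Esample q (fun s => \sum_(i < M) F i s) = \sum_(i < M) Esample q (F i).
Proof.
move=> F0; rewrite /Esample -esum_sum => [|s i _ _]; last first.
  by rewrite mule_ge0 ?lee_fin ?sample_prob_ge0.
by apply: eq_esum => s _; rewrite ge0_sume_distrr.
Qed.

Lemma Esample_esum (G : {ffun 'I_N -> T} -> T -> \bar R) : (forall s x, 0 <= G s x) ->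
  Esample q (fun s => \esum_(x in [set: T]) G s x) =
  \esum_(x in [set: T]) Esample q (fun s => G s x).
Proof.
move=> G0; rewrite /Esample -exchange_esum => [|s x]; last first.
  by rewrite mule_ge0 ?lee_fin ?sample_prob_ge0.
by apply: eq_esum => s _; rewrite esumZl ?sample_prob_ge0.
Qed.

Lemma Esample_prod (f : 'I_N -> T -> R) (m : 'I_N -> R) :
  (forall n y, 0 <= f n y)%R -> (forall n, Eq_X (f n) = (m n)%:E) ->
  Esample q (fun s => (\prod_(n < N) f n (s n))%:E) = (\prod_(n < N) m n)%:E.
Proof.
move=> f0 fm; rewrite /Esample -(esum_ffun_prod (a := fun n y => q y * f n y)%R) //.
- by apply: eq_esum => s _; rewrite -EFinM big_split.
- by move=> n y; rewrite mulr_ge0 ?q_ge0.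
Qed.

Lemma Esample_cst (c : R) : (0 <= c)%R ->
  Esample q (fun s : {ffun 'I_N -> T} => c%:E) = c%:E.
Proof.
move=> c0; have := Esample_prod (fun _ _ => ler01) (fun=> Eq_X1).
rewrite !big1 // => E1.
transitivity (Esample q (fun s : {ffun 'I_N -> T} => c%:E * 1)).
  by apply: eq_esum => s _; rewrite mule1.
by rewrite EsampleZ // E1 mule1.
Qed.

Lemma Esample_coord (n : 'I_N) (g : T -> R) mu : (forall y, 0 <= g y)%R ->
  Eq_X g = mu%:E -> Esample q (fun s => (g (s n))%:E) = mu%:E.
Proof.
move=> g0 gmu; pose f i := if i == n then g else fun=> 1%R.
have prod_supp (F : 'I_N -> R) : (forall i, i != n -> F i = 1%R) -> (\prod_i F i = F n)%R.
  by move=> F1; rewrite (bigD1 n) //= big1 ?mulr1.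
have -> : mu = (\prod_(i < N) if i == n then mu else 1)%R.
  by rewrite prod_supp ?eqxx // => i /negbTE ->.
rewrite -(@Esample_prod f) => [|i y|i]; last 2 first.
- by rewrite /f; case: ifP => _; rewrite ?g0.
- by rewrite /f; case: ifP => _; rewrite ?Eq_X1.
by apply: eq_esum => s _; rewrite prod_supp /f ?eqxx // => i /negbTE ->.
Qed.

Lemma Esample_coord2 (n m : 'I_N) (g h : T -> R) mu nu : n != m ->
  (forall y, 0 <= g y)%R -> Eq_X g = mu%:E ->
  (forall y, 0 <= h y)%R -> Eq_X h = nu%:E ->
  Esample q (fun s => (g (s n) * h (s m))%:E) = (mu * nu)%:E.
Proof.
move=> nm g0 gmu h0 hnu.
pose f i := if i == n then g else if i == m then h else fun=> 1%R.
have fn : f n = g by rewrite /f eqxx.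
have fm : f m = h by rewrite /f eq_sym (negbTE nm) eqxx.
have -> : (mu * nu = \prod_(i < N) if i == n then mu else if i == m then nu else 1)%R.
  rewrite (prodr_supp2 nm) ?eqxx ?(eq_sym m n) ?(negbTE nm) //.
  by move=> i /negbTE -> /negbTE ->.
rewrite -(@Esample_prod f) => [|i y|i]; last 2 first.
- by rewrite /f; do 2?case: ifP => _; rewrite ?g0 ?h0.
- by rewrite /f; do 2?case: ifP => _; rewrite ?Eq_X1.
apply: eq_esum => s _; rewrite (prodr_supp2 nm) ?fn ?fm //.
by move=> i i_n i_m; rewrite /f (negbTE i_n) (negbTE i_m).
Qed.

Lemma Esample_dist_le (F G : {ffun 'I_N -> T} -> R) (a b : R) :
  (forall s, 0 <= F s)%R -> (forall s, 0 <= G s)%R ->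
  Esample q (fun s => (F s)%:E) = a%:E -> Esample q (fun s => (G s)%:E) = b%:E ->
  (`|a - b|)%:E <= Esample q (fun s => (`|F s - G s|)%:E).
Proof.
have le_dist (F' G' : {ffun 'I_N -> T} -> R) : (forall s, 0 <= G' s)%R ->
    Esample q (fun s => (F' s)%:E) <=
    Esample q (fun s => (G' s)%:E) + Esample q (fun s => (`|F' s - G' s|)%:E).
  move=> G'0; rewrite -EsampleD => [|s|s]; rewrite ?lee_fin //.
  by apply: le_Esample => s; rewrite -EFinD lee_fin -lerBlDl ler_norm.
move=> F0 G0 Fa Gb; have := le_dist F G G0; have := le_dist G F F0.
have -> : Esample q (fun s => (`|G s - F s|)%:E) = Esample q (fun s => (`|F s - G s|)%:E).
  by apply: eq_esum => s _; rewrite distrC.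
rewrite Fa Gb; case: (Esample q _) => [d| |] //= h1 h2; last by rewrite leey.
by rewrite -!EFinD !lee_fin ler_norml in h1 h2 *; apply/andP; split; lra.
Qed.

Section sample_mean.
Variables (g : T -> R) (mu nu : R).
Hypotheses (N_gt0 : (0 < N)%N) (g_ge0 : forall y, (0 <= g y)%R).
Hypotheses (g_mean : Eq_X g = mu%:E) (g_sqr : Eq_X (fun y => g y ^+ 2)%R = nu%:E).

Let N_neq0 : (N%:R != 0 :> R)%R. Proof. by rewrite pnatr_eq0 -lt0n. Qed.

Lemma smean_ge0 s : (0 <= smean g s)%R.
Proof. by rewrite divr_ge0 ?ler0n ?sumr_ge0. Qed.

Lemma Esample_smean : Esample q (fun s => (smean g s)%:E) = mu%:E.
Proof.
transitivity (Esample q (fun s => (N%:R^-1)%:E * \sum_(n < N) (g (s n))%:E)).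
  by apply: eq_esum => s _; congr (_ * _); rewrite sumEFin -EFinM mulrC.
rewrite EsampleZ ?invr_ge0 ?ler0n //; last first.
  by move=> s; rewrite sume_ge0 // => n _; rewrite lee_fin.
rewrite Esample_sum; last by move=> n s; rewrite lee_fin.
under eq_bigr => n _ do rewrite (Esample_coord n g_ge0 g_mean).
by rewrite sumEFin sumr_const card_ord -EFinM -[(mu *+ N)%R]mulr_natl (mulKf N_neq0).
Qed.

Lemma Esample_smean_sqr :
  Esample q (fun s => ((smean g s) ^+ 2)%:E) = ((nu + (N%:R - 1) * mu ^+ 2) / N%:R)%:E.
Proof.
have gg0 y z : (0 <= g y * g z)%R by rewrite mulr_ge0.
transitivity (Esample q (fun s => ((N%:R ^+ 2)^-1)%:E *
    \sum_(n < N) \sum_(m < N) (g (s n) * g (s m))%:E)).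
  apply: eq_esum => s _; congr (_ * _); under eq_bigr do rewrite sumEFin.
  rewrite sumEFin -EFinM /smean expr_div_n mulrC; congr (_ * _)%:E.
  by rewrite expr2 big_distrl; apply: eq_bigr => n _; rewrite big_distrr.
rewrite EsampleZ ?invr_ge0 ?exprn_ge0 ?ler0n //; last first.
  by move=> s; rewrite !sume_ge0 // => n _; rewrite sume_ge0 // => m _; rewrite lee_fin.
rewrite Esample_sum; last by move=> n s; rewrite sume_ge0 // => m _; rewrite lee_fin.
under eq_bigr => n _.
  rewrite Esample_sum; last by move=> m s; rewrite lee_fin.
  under eq_bigr => m _.
    have -> : Esample q (fun s => (g (s n) * g (s m))%:E) =
              (if n == m then nu else mu * mu)%:E.
      case: eqP => [<-|/eqP nm]; last exact: Esample_coord2.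
      by rewrite -(Esample_coord n (g := fun y => g y ^+ 2)%R) // => y; rewrite exprn_ge0.
    over.
  rewrite sumEFin sum_ord_if_eq.
  over.
rewrite sumEFin sumr_const card_ord -EFinM; congr EFin.
by rewrite -mulr_natl; field; exact: N_neq0.
Qed.

Lemma Esample_smean_var :
  Esample q (fun s => ((smean g s - mu) ^+ 2)%:E) = ((nu - mu ^+ 2) / N%:R)%:E.
Proof.
have mu_ge0 : (0 <= mu)%R by rewrite -lee_fin -g_mean Eq_X_ge0.
have dev_ge0 s : 0 <= ((smean g s - mu) ^+ 2)%:E by rewrite lee_fin sqr_ge0.
have sqr_smean_ge0 s : 0 <= ((smean g s) ^+ 2)%:E by rewrite lee_fin sqr_ge0.
have mu2_ge0 (s : {ffun 'I_N -> T}) : 0 <= (mu ^+ 2)%:E by rewrite lee_fin sqr_ge0.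
have smean_ge0E s : 0 <= (smean g s)%:E by rewrite lee_fin smean_ge0.
have lin_ge0 s : 0 <= (2 * mu)%:E * (smean g s)%:E.
  by rewrite -EFinM lee_fin; apply: mulr_ge0 (smean_ge0 s); exact: mulr_ge0.
(* No subtraction on extended reals: compare E[(Y - mu)^2 + 2 mu Y] with E[Y^2 + mu^2]. *)
have : Esample q (fun s => ((smean g s - mu) ^+ 2)%:E + (2 * mu)%:E * (smean g s)%:E) =
    Esample q (fun s => ((smean g s) ^+ 2)%:E + (mu ^+ 2)%:E).
  by apply: eq_esum => s _; congr (_ * _); rewrite -EFinM -!EFinD; congr EFin; ring.
rewrite !EsampleD // EsampleZ ?mulr_ge0 //.
rewrite Esample_smean Esample_smean_sqr Esample_cst ?sqr_ge0 //.
have := Esample_ge0 dev_ge0.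
case: (Esample q _) => [x _ /= [xE]| //|//]; congr EFin.
by apply: (addIr (2 * mu * mu)%R); rewrite xE; field; exact: N_neq0.
Qed.

End sample_mean.
End iid_sample.

Lemma norm2sq_le_sqr (R : realType) (S : finType) (f : seq S -> R) (B : R) :
  (norm1 f <= B%:E)%E -> (norm2sq f <= (B ^+ 2)%:E)%E.
Proof.
move=> f1B.
have fB x : `|f x| <= B.
  rewrite -lee_fin (le_trans _ f1B) //; apply: esum_ge; exists [set x].
    by split; [exact: finite_set1 |].
  by rewrite fsbig_set1.
have B0 : 0 <= B by apply: le_trans (fB [::]).
apply: (@le_trans _ _ (\esum_(x in [set: seq S]) (B%:E * (`|f x|)%:E))%E).
  apply: le_esum => x _; rewrite -EFinM lee_fin -real_normK ?num_real // expr2.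
  exact: ler_wpM2r.
rewrite esumZl // expr2 EFinM.
by apply: lee_wpmul2l; rewrite ?lee_fin.
Qed.

Section resampling.
Variables (R : realType) (S : finType) (p q : seq S -> R).
Hypotheses (hp : is_distr p) (hq : is_distr q) (pq : abs_cont p q).
Local Notation T := (seq S).
Local Notation w := (weight p q).
Local Notation Eq_X := (Eq_X q).

Lemma weight_ge0 y : 0 <= w y.
Proof. by rewrite divr_ge0 ?(q_ge0 hq) //; case: hp. Qed.

Lemma mul_weight y : q y * w y = p y.
Proof.
have [qy0|qy_neq0] := eqVneq (q y) 0; first by rewrite qy0 mul0r pq.
by rewrite mulrCA divff ?mulr1.
Qed.

Lemma Eq_X_weight : Eq_X w = 1%E.
Proof. by rewrite /Eq_X; under eq_esum do rewrite mul_weight; case: hp. Qed.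

Definition weight_at (x y : T) : R := w y * (y == x)%:R.

Lemma weight_at_ge0 x y : 0 <= weight_at x y.
Proof. by rewrite mulr_ge0 ?weight_ge0 ?ler0n. Qed.

Lemma Eq_X_weight_at x : Eq_X (weight_at x) = (p x)%:E.
Proof.
rewrite /Eq_X (esum_supp1 (t := x)) => [|y|y /negbTE yx]; rewrite /weight_at.
- by rewrite eqxx mulr1 mul_weight.
- by rewrite lee_fin mulr_ge0 ?(q_ge0 hq) ?weight_at_ge0.
- by rewrite yx !mulr0.
Qed.

Lemma Eq_X_sqr_weight_at x : Eq_X (fun y => weight_at x y ^+ 2) = (q x * w x ^+ 2)%:E.
Proof.
rewrite /Eq_X (esum_supp1 (t := x)) => [|y|y /negbTE yx].
- by rewrite /weight_at eqxx mulr1.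
- by rewrite lee_fin mulr_ge0 ?(q_ge0 hq) ?sqr_ge0.
- by rewrite /weight_at yx mulr0 expr0n mulr0.
Qed.

Section sample.
Variables (N : nat) (s : {ffun 'I_N -> T}).

Lemma phatE x :
  phat p q s x = (\sum_(n < N) weight_at x (s n)) / \sum_(n < N) w (s n).
Proof. by rewrite /phat mulr_suml; apply: eq_bigr => n _; rewrite mulrAC. Qed.

Lemma sum_weight_at_le x : \sum_(n < N) weight_at x (s n) <= \sum_(n < N) w (s n).
Proof.
apply: ler_sum => n _; rewrite /weight_at.
by case: eqP => _; rewrite ?mulr1 ?mulr0 ?weight_ge0.
Qed.

Lemma phat_ge0 x : 0 <= phat p q s x.
Proof.
by rewrite phatE divr_ge0 ?sumr_ge0 // => n _; rewrite ?weight_at_ge0 ?weight_ge0.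
Qed.

Lemma phat_le1 x : phat p q s x <= 1.
Proof.
rewrite phatE; have [->|W_neq0] := eqVneq (\sum_(n < N) w (s n)) 0.
  by rewrite invr0 mulr0.
have W_gt0 : 0 < \sum_(n < N) w (s n).
  by rewrite lt0r W_neq0 sumr_ge0 // => n _; rewrite weight_ge0.
by rewrite ler_pdivrMr // mul1r sum_weight_at_le.
Qed.

Lemma esum_phat_le1 : (\esum_(x in [set: T]) (phat p q s x)%:E <= 1)%E.
Proof.
rewrite /phat; under eq_esum do rewrite -sumEFin.
set W := \sum_(m < N) w (s m).
have term_ge0 n x : 0 <= w (s n) / W * (s n == x)%:R.
  rewrite mulr_ge0 ?ler0n // divr_ge0 ?weight_ge0 // sumr_ge0 // => m _.
  exact: weight_ge0.
rewrite esum_sum => [|x n _ _]; last by rewrite lee_fin.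
rewrite (eq_bigr (fun n => (w (s n) / W)%:E)) => [|n _]; last first.
  rewrite (esum_supp1 (t := s n)) => [|x|x]; first by rewrite eqxx mulr1.
    by rewrite lee_fin.
  by rewrite eq_sym => /negbTE ->; rewrite mulr0.
rewrite sumEFin -mulr_suml -/W lee_fin.
by have [->|W_neq0] := eqVneq W 0; [rewrite invr0 mulr0 | rewrite divff].
Qed.

Lemma smean_weight_at x : smean (weight_at x) s = smean w s * phat p q s x.
Proof.
(* If all weights vanish then so does the left side, and phat is 0 since x / 0 = 0. *)
rewrite phatE /smean; set A := \sum_(n < N) _; set W := \sum_(n < N) _.
have [W0|W_neq0] := eqVneq W 0.
  have -> : A = 0.
    apply/eqP; rewrite eq_le -[X in A <= X]W0 sum_weight_at_le sumr_ge0 // => n _.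
    exact: weight_at_ge0.
  by rewrite W0 !mul0r.
by rewrite [W / _]mulrC mulrACA divff // mulr1 mulrC.
Qed.

End sample.

Lemma chi2_finite_sqr_weight : (Eq_W p q (fun u => (u ^+ 4)%R) < +oo)%E ->
  chi2 p q = (fine (chi2 p q))%:E /\
  Eq_X (fun y => w y ^+ 2) = (1 + fine (chi2 p q))%:E.
Proof.
move=> w4_fin; have w_sqr_ge0 y : 0 <= w y ^+ 2 by rewrite sqr_ge0.
have w2_fin : (Eq_X (fun y => w y ^+ 2)%R < +oo)%E.
  apply: (le_lt_trans (le_Eq_X hq (g := fun y => w y ^+ 4 + 1)%R _)).
    by move=> y; have := sqr_ge0 (w y ^+ 2 - 1); have := w_sqr_ge0 y; nra.
  rewrite Eq_XD ?Eq_X1 // => [|y]; last by rewrite exprn_ge0 ?weight_ge0.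
  by apply: lte_add_pinfty; [exact: w4_fin | exact: ltry].
set M2 := fine (Eq_X (fun y => w y ^+ 2)).
have M2E : Eq_X (fun y => w y ^+ 2) = M2%:E by rewrite fineK // ge0_fin_numE ?Eq_X_ge0.
have : (chi2 p q + 2%:E = M2%:E + 1)%E.
  have -> : 2%:E = (2%:E * Eq_X w)%E by rewrite Eq_X_weight mule1.
  have -> : chi2 p q = Eq_X (fun y => (w y - 1) ^+ 2)%R by [].
  rewrite -M2E -(Eq_X1 hq) -(Eq_XZ hq _ weight_ge0) // -!Eq_XD //.
  - by congr (Eq_X _); apply/funext => y; ring.
  - by move=> y; rewrite sqr_ge0.
  - by move=> y; rewrite mulr_ge0 ?weight_ge0.
case: (chi2 p q) => [c /= [cE]| //|//]; split => //.
by rewrite M2E; congr EFin; lra.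
Qed.

Section bounds.
Variables (N : nat) (M2 : R).
Hypotheses (N_gt0 : (0 < N)%N) (M2E : Eq_X (fun y => w y ^+ 2) = M2%:E).
Implicit Type s : {ffun 'I_N -> T}.

Lemma Esample_sqr_dev_smean_weight :
  Esample q (fun s => ((smean w s - 1) ^+ 2)%:E) = ((M2 - 1) / N%:R)%:E.
Proof.
by have := Esample_smean_var hq N_gt0 weight_ge0 Eq_X_weight M2E; rewrite expr1n.
Qed.

Lemma Esample_sum_sqr_dev_smean_weight_at_le :
  (Esample q (fun s => \esum_(x in [set: T]) ((smean (weight_at x) s - p x) ^+ 2)%R%:E)
    <= (M2 / N%:R)%:E)%E.
Proof.
rewrite (Esample_esum hq); last by move=> s x; rewrite lee_fin sqr_ge0.
under eq_esum => x _ do rewrite (Esample_smean_var hq N_gt0 (weight_at_ge0 x)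
  (Eq_X_weight_at x) (Eq_X_sqr_weight_at x)).
rewrite mulrC EFinM -M2E -(Eq_XZ hq) ?invr_ge0 ?ler0n //; last by move=> y; rewrite sqr_ge0.
apply: le_esum => x _; rewrite lee_fin [leRHS]mulrCA [leRHS]mulrC.
by rewrite ler_pM2r ?invr_gt0 ?ltr0n // gerBl sqr_ge0.
Qed.

Lemma norm2sq_phat_le s :
  (norm2sq (fun x => (phat p q s x - p x)%R) <=
    2%:E * (\esum_(x in [set: T]) ((smean (weight_at x) s - p x) ^+ 2)%:E) +
    2%:E * ((smean w s - 1) ^+ 2)%:E)%E.
Proof.
have sq_ge0 x : (0 <= ((smean (weight_at x) s - p x) ^+ 2)%:E)%E by rewrite lee_fin sqr_ge0.
have c_ge0 : 0 <= 2 * (smean w s - 1) ^+ 2 by rewrite mulr_ge0 ?sqr_ge0.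
apply: (@le_trans _ _ (\esum_(x in [set: T]) (2%:E * ((smean (weight_at x) s - p x) ^+ 2)%:E
    + (2 * (smean w s - 1) ^+ 2)%:E * (phat p q s x)%:E))%E).
  apply: le_esum => x _; rewrite -!EFinM -EFinD lee_fin smean_weight_at.
  by rewrite sqr_rescale_le // phat_ge0 phat_le1.
rewrite esumD => [|x _|x _]; last 2 first.
- by rewrite mule_ge0.
- by rewrite -EFinM lee_fin mulr_ge0 ?phat_ge0.
rewrite !esumZl //; last by move=> x _; rewrite lee_fin phat_ge0.
rewrite leeD2l // EFinM -muleA lee_wpmul2l //.
by rewrite -[leRHS]mule1 lee_wpmul2l ?lee_fin ?sqr_ge0 // esum_phat_le1.
Qed.

Lemma Esample_norm2sq_phat_le :
  (Esample q (fun s => norm2sq (fun x => (phat p q s x - p x)%R))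
    <= (4 * M2 / N%:R)%:E)%E.
Proof.
pose V s := (\esum_(x in [set: T]) ((smean (weight_at x) s - p x) ^+ 2)%:E)%E.
have V_ge0 s : (0 <= V s)%E by apply: esum_ge0 => x _; rewrite lee_fin sqr_ge0.
apply: (le_trans (le_Esample hq norm2sq_phat_le)).
rewrite (EsampleD hq); last 2 first.
- by move=> s; apply: mule_ge0 (V_ge0 s).
- by move=> s; rewrite mule_ge0 // lee_fin sqr_ge0.
have sqr_dev_ge0 s : (0 <= ((smean w s - 1) ^+ 2)%:E)%E by rewrite lee_fin sqr_ge0.
rewrite (EsampleZ hq (F := V)) // (EsampleZ hq) // Esample_sqr_dev_smean_weight.
apply: (@le_trans _ _ (2%:E * (M2 / N%:R)%:E + 2%:E * ((M2 - 1) / N%:R)%:E)%E).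
  by rewrite leeD2r // lee_wpmul2l // Esample_sum_sqr_dev_smean_weight_at_le.
rewrite -!EFinM -EFinD lee_fin -!mulrA -mulrDr -mulrDl !mulrA.
by rewrite ler_pM2r ?invr_gt0 ?ltr0n //; lra.
Qed.

Lemma Esample_phat x : Esample q (fun s => (phat p q s x)%:E) = (pbar p q N x)%:E.
Proof.
have phat_ge0E s : (0 <= (phat p q s x)%:E)%E by rewrite lee_fin phat_ge0.
rewrite /pbar fineK // ge0_fin_numE ?(Esample_ge0 hq) //.
apply: (@le_lt_trans _ _ (Esample q (fun s : {ffun 'I_N -> T} => 1%:E))).
  by apply: le_Esample => // s; rewrite lee_fin phat_le1.
by rewrite (Esample_cst hq) // ltry.
Qed.

Lemma pbar_dist_le x :
  (`|pbar p q N x - p x|%:E <=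
    Esample q (fun s => (phat p q s x * `|smean w s - 1|)%:E))%E.
Proof.
have := Esample_dist_le hq (fun s => phat_ge0 s x) (smean_ge0 (weight_at_ge0 x))
  (Esample_phat x) (Esample_smean hq N_gt0 (weight_at_ge0 x) (Eq_X_weight_at x)).
move/le_trans; apply.
apply: le_Esample => // s; rewrite lee_fin smean_weight_at.
by rewrite -[X in `|X - _|]mul1r -mulrBl normrM distrC mulrC ger0_norm ?phat_ge0.
Qed.

Lemma norm1_pbar_le (r : R) : 0 < r -> (M2 - 1) / N%:R <= r ^+ 2 ->
  (norm1 (fun x => (pbar p q N x - p x)%R) <= r%:E)%E.
Proof.
move=> r_gt0 var_le; have r_ge0 := ltW r_gt0.
apply: (le_trans (le_esum (fun x _ => pbar_dist_le x))).
rewrite -(Esample_esum hq); last by move=> s x; rewrite lee_fin mulr_ge0 ?phat_ge0.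
apply: (@le_trans _ _ (Esample q (fun s => (`|smean w s - 1|)%:E))).
  apply: le_Esample => // s; under eq_esum do rewrite EFinM muleC.
  rewrite esumZl //; last by move=> x _; rewrite lee_fin phat_ge0.
  by rewrite -[leRHS]mule1 lee_wpmul2l // esum_phat_le1.
(* AM-GM in place of Cauchy-Schwarz for E|Z - 1|; r = sqrt((1 + chi^2) / N) in the end. *)
apply: (@le_trans _ _ (Esample q (fun s =>
    ((2 * r)^-1)%:E * ((smean w s - 1) ^+ 2)%:E + (r / 2)%:E)%E)).
  by apply: le_Esample => // s; rewrite -EFinM -EFinD lee_fin ler_norm_amgm.
have inv2r_ge0 : 0 <= (2 * r)^-1 by rewrite invr_ge0 mulr_ge0.
rewrite (EsampleD hq); last 2 first.
- by move=> s; rewrite -EFinM lee_fin mulr_ge0 ?sqr_ge0.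
- by move=> s; rewrite lee_fin divr_ge0.
rewrite (EsampleZ hq) //; last by move=> s; rewrite lee_fin sqr_ge0.
rewrite Esample_sqr_dev_smean_weight (Esample_cst hq) ?divr_ge0 //.
rewrite -EFinM -EFinD lee_fin.
have : (2 * r)^-1 * ((M2 - 1) / N%:R) <= (2 * r)^-1 * r ^+ 2 by rewrite ler_wpM2l.
have -> : (2 * r)^-1 * r ^+ 2 = r / 2 by field; rewrite gt_eqF.
lra.
Qed.

End bounds.
End resampling.

Theorem theorem1 (R : realType) (S : finType) (p q : seq S -> R) :
  is_distr p -> is_distr q -> abs_cont p q ->
  (Eq_W p q (fun w : R => (w ^+ 4)%R) < +oo)%E ->
  exists C : R, exists N0 : nat, forall N : nat, (N0 <= N)%N ->
    [/\ (norm1 (fun x => (pbar p q N x - p x)%R)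
           <= (C * Num.sqrt ((1 + fine (chi2 p q)) / N%:R))%:E)%E,
        (norm2sq (fun x => (pbar p q N x - p x)%R)
           <= (C * ((1 + fine (chi2 p q)) / N%:R))%:E)%E
      & (Esample q (fun s : {ffun 'I_N -> seq S} =>
            norm2sq (fun x => (phat p q s x - p x)%R))
           <= (C * ((1 + fine (chi2 p q)) / N%:R))%:E)%E].
Proof.
move=> hp hq pq w4_fin.
have [chi2E M2E] := chi2_finite_sqr_weight hp hq pq w4_fin.
have c2_ge0 : 0 <= fine (chi2 p q).
  by rewrite -lee_fin -chi2E; apply: Eq_X_ge0 => // y; exact: sqr_ge0.
exists 4, 1%N => N N_gt0; set a := (1 + fine (chi2 p q)) / N%:R.
have a_ge0 : 0 <= a by rewrite divr_ge0 ?addr_ge0.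
have var_le : (1 + fine (chi2 p q) - 1) / N%:R <= Num.sqrt a ^+ 2.
  by rewrite sqr_sqrtr // ler_pM2r ?invr_gt0 ?ltr0n // lerBlDr lerDl.
have sqrt_a_gt0 : 0 < Num.sqrt a by rewrite sqrtr_gt0 divr_gt0 ?ltr0n ?ltr_pwDl.
have norm1_le := norm1_pbar_le hp hq pq N_gt0 M2E sqrt_a_gt0 var_le.
split.
- by apply: le_trans norm1_le _; rewrite lee_fin ler_peMl ?sqrtr_ge0 // ler1n.
- apply: le_trans (norm2sq_le_sqr norm1_le) _.
  by rewrite sqr_sqrtr // lee_fin ler_peMl // ler1n.
- by rewrite mulrA; exact: Esample_norm2sq_phat_le.
Qed.
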